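(* Let $(b,c)$ be a connected graph over a countable set $X$ with Schrödinger operator $H=H_{b,c}$, and fix $x_0\in X$. Then $\mathcal{S}^+_1=\{f\in\mathcal{S}^+: f(x_0)=1\}$ is compact with respect to the product topology on $\mathbb{R}^X$.
   Context: A graph over $X$ is $(b,c)$ with $b:X\times X\to[0,\infty)$, $c:X\to\mathbb{R}$, $\sum_yb(x,y)<\infty$ for all $x$ ($b$ need not be symmetric); connected: any $x,z$ are joined by a finite sequence $y_1,\dots,y_n$ with $b(y_i,y_{i+1})>0$. $H_{b,c}f(x)=\sum_yb(x,y)(f(x)-f(y))+c(x)f(x)$ on $\mathrm{Dom}(H)=\{f:\sum_yb(x,y)|f(y)|<\infty\ \forall x\}$. $\mathcal{S}^+$ is the set of nonnegative, not identically zero $f\in\mathrm{Dom}(H)$ with $Hf\ge0$. *)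

From HB Require Import structures.
From mathcomp Require Import all_boot all_order all_algebra.
From mathcomp Require Import all_classical all_reals all_analysis.
From Stdlib Require Import Relations.
Set Implicit Arguments. Unset Strict Implicit. Unset Printing Implicit Defensive.
Import Order.TTheory GRing.Theory Num.Theory.
Import numFieldTopology.Exports numFieldNormedType.Exports.
Local Open Scope classical_set_scope.
Local Open Scope ring_scope.

Section Graphs.
Variables (R : realType) (X : countType).

Definition graph_connected (b : X -> X -> R) : Prop :=
  forall x z : X, clos_refl_trans X (fun u v => 0 < b u v) x z.

Definition asum (u : X -> R) : R :=
  fine (\esum_(y in [set: X]) (Num.max (u y) 0)%:E)
  - fine (\esum_(y in [set: X]) (Num.max (- u y) 0)%:E).

Definition domH (b : X -> X -> R) (f : X -> R) : Prop :=
  forall x, (\esum_(y in [set: X]) (b x y * `|f y|)%:E < +oo)%E.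

Definition Hop (b : X -> X -> R) (c : X -> R) (f : X -> R) (x : X) : R :=
  asum (fun y => b x y * (f x - f y)) + c x * f x.

Definition Splus (b : X -> X -> R) (c : X -> R) (f : X -> R) : Prop :=
  [/\ forall x, 0 <= f x, exists x, f x != 0, domH b f
    & forall x, 0 <= Hop b c f x].

End Graphs.

From HB Require Import structures.
From mathcomp Require Import all_boot all_order all_algebra.
From mathcomp Require Import all_classical all_reals all_analysis.
From mathcomp Require Import finmap.
Set Implicit Arguments. Unset Strict Implicit. Unset Printing Implicit Defensive.
Import Order.TTheory GRing.Theory Num.Theory.
Import numFieldTopology.Exports numFieldNormedType.Exports.
Local Open Scope classical_set_scope.
Local Open Scope ring_scope.

(* For nonnegative f, the conditions "f in Dom(H)" and "Hf >= 0" at a vertex x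
   together say that every finite partial sum of y |-> b(x,y) f(y) is at most
   (deg x + c x) f(x).  Each of these conditions involves finitely many
   coordinates of f, so S^+_1 is closed in the product topology.  Taking a
   single vertex gives the Harnack inequality
   b(x,y) f(y) <= max(deg x + c x, 0) f(x), so along the paths provided by
   connectedness every coordinate f(z) is bounded uniformly on S^+_1, starting
   from f(x0) = 1.  Thus S^+_1 is a closed subset of a product of compact
   intervals, which is compact by Tychonoff's theorem. *)

Section NonnegativeSums.
Variables (R : realType) (T : choiceType).
Implicit Types (g : T -> R) (M r : R).
Local Notation esumT g := (\esum_(y in [set: T]) ((g y)%:E : \bar R))%E.

Lemma ge0_esum_leP g M : (forall y, 0 <= g y) ->
  (esumT g <= M%:E)%E <-> forall A : {fset T}, \sum_(y <- A) g y <= M.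
Proof.
move=> g0; split => [leM A|leM].
  rewrite -lee_fin; apply: le_trans leM; apply: esum_ge; exists [set` A].
    by split=> //; exact: finite_fset.
  by rewrite fsbig_finite ?set_fsetK ?sumEFin //; exact: finite_fset.
apply: ge_ereal_sup => _ [A [finA _] <-].
by rewrite fsumEFin // lee_fin fsbig_finite.
Qed.

Lemma esumZl r g : 0 <= r -> esumT (fun y => r * g y) = (r%:E * esumT g)%E.
Proof.
move=> r0; rewrite /esum -ereal_supZl //; last first.
  by apply/set0P; exists 0%E, set0; rewrite ?fsbig_set0 //; exact: fsets_set0.
congr ereal_sup; apply/seteqP; split => e.
  move=> [A finA <-]; exists (\sum_(y \in A) (g y)%:E)%E; first by exists A.
  by case: finA => finA _; rewrite !fsumEFin // -EFinM mulr_fsumr.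
move=> [_ [A [finA _] <-] <-]; exists A => //.
by rewrite !fsumEFin // -EFinM mulr_fsumr.
Qed.

Lemma ge0_esum_fin_num g : (forall y, 0 <= g y) ->
  (esumT g < +oo)%E -> esumT g \is a fin_num.
Proof. by move=> g0; rewrite ge0_fin_numE // esum_ge0 // => y _; rewrite lee_fin. Qed.

Lemma ge0_summable g : (forall y, 0 <= g y) ->
  (esumT g < +oo)%E -> summable [set: T] (EFin \o g).
Proof.
move=> g0 /(le_lt_trans _); apply; apply: le_esum => y _.
by rewrite /= ger0_norm.
Qed.

End NonnegativeSums.

Lemma asumB (R : realType) (X : countType) (p q : X -> R) :
  (forall y, 0 <= p y) -> (forall y, 0 <= q y) ->
  (\esum_(y in [set: X]) (p y)%:E < +oo)%E ->
  (\esum_(y in [set: X]) (q y)%:E < +oo)%E ->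
  asum (fun y => p y - q y) =
  fine (\esum_(y in [set: X]) (p y)%:E) - fine (\esum_(y in [set: X]) (q y)%:E).
Proof.
move=> p0 q0 p_fin q_fin.
have max0_fin_num (u g : X -> R) : (forall y, 0 <= g y) ->
    (\esum_(y in [set: X]) (g y)%:E < +oo)%E -> (forall y, u y <= g y) ->
    (\esum_(y in [set: X]) (Num.max (u y) 0)%:E)%E \is a fin_num.
  move=> g0 g_fin ug; apply: ge0_esum_fin_num => [y|].
    by rewrite le_max lexx orbT.
  by apply: le_lt_trans g_fin; apply: le_esum => y _; rewrite lee_fin ge_max ug g0.
have [pos_fin neg_fin] :
    (\esum_(y in [set: X]) (Num.max (p y - q y) 0)%:E)%E \is a fin_num /\
    (\esum_(y in [set: X]) (Num.max (- (p y - q y)) 0)%:E)%E \is a fin_num.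
  split; [apply: (max0_fin_num _ _ p0 p_fin) | apply: (max0_fin_num _ _ q0 q_fin)].
    by move=> y; rewrite gerBl.
  by move=> y; rewrite opprB gerBl.
have := esumB (ge0_summable p0 p_fin) (ge0_summable q0 q_fin)
  (fun y _ => p0 y) (fun y _ => q0 y).
rewrite (eq_esum (b := fun y => (Num.max (p y - q y) 0)%:E)); last first.
  by move=> y _; rewrite funeposE EFin_max EFinB.
rewrite (eq_esum (a := (_ \- _)^\-%E)
  (b := fun y => (Num.max (- (p y - q y)) 0)%:E)); last first.
  by move=> y _; rewrite funenegE EFin_max EFinN EFinB.
by move=> e; rewrite /asum -fineB // e fineB // ge0_esum_fin_num.
Qed.

Section ContinuousReal.
Variables (R : realType) (T : topologicalType).

Lemma continuous_sum (I : Type) (s : seq I) (F : I -> T -> R) :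
  (forall i, continuous (F i)) -> continuous (fun t => \sum_(i <- s) F i t).
Proof.
move=> Fc; elim: s => [|i s IHs].
  rewrite (_ : (fun t => _) = cst 0); first exact: cst_continuous.
  by rewrite funeqE => t; rewrite big_nil.
rewrite (_ : (fun t => _) = F i + (fun t => \sum_(j <- s) F j t)).
  by move=> t; apply: continuousD; [exact: Fc | exact: IHs].
by rewrite funeqE => t; rewrite big_cons.
Qed.

Lemma closed_le_continuous (g h : T -> R) : continuous g -> continuous h ->
  closed [set t | g t <= h t].
Proof.
move=> gc hc.
have -> : [set t | g t <= h t] = (fun t => h t - g t) @^-1` [set r | 0 <= r].
  by apply/seteqP; split => t; rewrite /= subr_ge0.
apply: preimage_closed; last exact: closed_ge.
by move=> t _; apply: continuousB; [exact: hc | exact: gc].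
Qed.

End ContinuousReal.

Lemma closed_forall (T : topologicalType) (I : Type) (P : I -> set T) :
  (forall i, closed (P i)) -> closed [set t | forall i, P i t].
Proof.
move=> Pc; have -> : [set t | forall i, P i t] = \bigcap_(i in [set: I]) P i.
  by apply/seteqP; split => t /= Pt i //; exact: Pt.
exact: closed_bigI.
Qed.

Section Supersolutions.
Variables (R : realType) (X : countType) (b : X -> X -> R) (c : X -> R).

Definition deg x := fine (\esum_(y in [set: X]) (b x y)%:E).

Definition supersolution (f : X -> R) : Prop :=
  (forall y, 0 <= f y) /\
  forall x (A : {fset X}), \sum_(y <- A) b x y * f y <= (deg x + c x) * f x.

Lemma supersolution_edge_le (f : X -> R) x y : supersolution f ->
  b x y * f y <= (deg x + c x) * f x.
Proof. by case=> _ /(_ x [fset y]%fset); rewrite big_seq_fset1. Qed.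

Lemma supersolution_bounded_edge (F : set (X -> R)) x y :
  F `<=` supersolution -> 0 < b x y ->
  (exists M, forall f, F f -> f x <= M) -> exists M, forall f, F f -> f y <= M.
Proof.
move=> F_super bxy [M fxM]; exists (Num.max (deg x + c x) 0 * M / b x y).
move=> f Ff; have [f0 _] := F_super f Ff.
rewrite ler_pdivlMr // mulrC.
apply: le_trans (supersolution_edge_le x y (F_super f Ff)) _.
apply: le_trans (ler_wpM2l _ (fxM f Ff)); last by rewrite le_max lexx orbT.
by apply: ler_wpM2r => //; rewrite le_max lexx.
Qed.

Lemma supersolution_bounded (F : set (X -> R)) x : graph_connected b ->
  F `<=` supersolution -> (exists M, forall f, F f -> f x <= M) ->
  forall z, exists M, forall f, F f -> f z <= M.
Proof.
move=> b_conn F_super + z; elim: (b_conn x z) => [u v buv|//|u v w _ IHuv _ IHvw].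
  exact: supersolution_bounded_edge.
by move=> /IHuv /IHvw.
Qed.

Lemma closed_supersolution : closed [set f : {ptws X -> R} | supersolution f].
Proof.
have eval_cont y : continuous (fun f : {ptws X -> R} => f y).
  exact: proj_continuous.
have scaled_eval_cont r y : continuous (fun f : {ptws X -> R} => r * f y).
  by move=> f; apply: continuousM; [exact: cst_continuous | exact: eval_cont].
apply: closedI; apply: closed_forall => x.
  by apply: closed_le_continuous; [exact: cst_continuous | exact: eval_cont].
apply: closed_forall => A; apply: closed_le_continuous (scaled_eval_cont _ x).
by apply: continuous_sum => y; exact: scaled_eval_cont.
Qed.

Hypothesis b_ge0 : forall x y, 0 <= b x y.
Hypothesis b_sum : forall x, (\esum_(y in [set: X]) (b x y)%:E < +oo)%E.

Lemma HopE (f : X -> R) x : (forall y, 0 <= f y) ->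
  (\esum_(y in [set: X]) (b x y * f y)%:E < +oo)%E ->
  Hop b c f x = (deg x + c x) * f x - fine (\esum_(y in [set: X]) (b x y * f y)%:E).
Proof.
move=> f0 bf_fin; have bf0 y : 0 <= b x y * f y by rewrite mulr_ge0.
have deg_fx : (\esum_(y in [set: X]) (b x y * f x)%:E)%E = (f x * deg x)%:E.
  under eq_esum do rewrite mulrC.
  by rewrite esumZl // EFinM fineK // ge0_esum_fin_num.
rewrite /Hop.
have -> : (fun y => b x y * (f x - f y)) = fun y => b x y * f x - b x y * f y.
  by rewrite funeqE => y; rewrite mulrBr.
rewrite asumB ?deg_fx ?ltry //=; last by move=> y; rewrite mulr_ge0.
by rewrite mulrDl addrAC mulrC.
Qed.

Lemma domH_Hop_ge0P (f : X -> R) x : (forall y, 0 <= f y) ->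
  (\esum_(y in [set: X]) (b x y * `|f y|)%:E < +oo)%E /\ 0 <= Hop b c f x <->
  forall A : {fset X}, \sum_(y <- A) b x y * f y <= (deg x + c x) * f x.
Proof.
move=> f0; have bf0 y : 0 <= b x y * f y by rewrite mulr_ge0.
rewrite (eq_esum (b := fun y => (b x y * f y)%:E)) => [|y _]; last first.
  by rewrite ger0_norm.
rewrite -ge0_esum_leP //; split => [[bf_fin]|le_bf].
  by rewrite HopE // subr_ge0 -lee_fin fineK // ge0_esum_fin_num.
have bf_fin := le_lt_trans le_bf (ltry _).
by split=> //; rewrite HopE // subr_ge0 -lee_fin fineK // ge0_esum_fin_num.
Qed.

Lemma Splus1E x0 :
  [set f | Splus b c f /\ f x0 = 1] = [set f | supersolution f /\ f x0 = 1].
Proof.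
apply/seteqP; split => f [f_in f1]; split => //.
  case: f_in => f0 _ f_dom Hf_ge0; split=> // x.
  exact/domH_Hop_ge0P.
case: f_in => f0 f_super.
have f_dom_Hf x := (domH_Hop_ge0P x f0).2 (f_super x).
split=> // [|x|x]; first by exists x0; rewrite f1 oner_neq0.
  exact: (f_dom_Hf x).1.
exact: (f_dom_Hf x).2.
Qed.

End Supersolutions.

Theorem corollary2 (R : realType) (X : countType) (b : X -> X -> R) (c : X -> R)
  (x0 : X)
  (b_ge0 : forall x y, 0 <= b x y)
  (b_sum : forall x, (\esum_(y in [set: X]) (b x y)%:E < +oo)%E)
  (b_conn : graph_connected b) :
  compact ([set f : {ptws X -> R} | Splus b c f /\ f x0 = 1]).
Proof.
rewrite (Splus1E c b_ge0 b_sum x0).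
set S := [set f | supersolution b c f /\ f x0 = 1].
have S_bounded z : exists M, forall f, S f -> f z <= M.
  apply: (@supersolution_bounded _ _ b c S x0 b_conn) => [f [] //|].
  by exists 1 => f [_ ->].
have [M fM] := choice S_bounded.
have box_compact : compact [set f : {ptws X -> R} | forall z, `[0, M z]%classic (f z)].
  exact: (@tychonoff X (fun _ => R) _ (fun z => @segment_compact R 0 (M z))).
apply: (subclosed_compact _ box_compact) => [|f Sf z].
  apply: closedI; first exact: closed_supersolution.
  apply: (@preimage_closed _ _ (fun f : {ptws X -> R} => f x0) [set 1]).
    by move=> f _; exact: proj_continuous.
  exact: closed_eq.
by have [[f0 _] _] := Sf; rewrite /= in_itv /= f0 fM.
Qed.
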